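(* Fix a diffusion step $i$ with noise levels $\alpha^{x}_i,\alpha^{k}_i\in(0,1)$ and a noisy joint point $y_i=[x_i;k_i]\in\mathbb{R}^{n_x}\times\mathbb{R}^{n_k}$. Let $q(\cdot\mid y_i)$ be the product proposal on clean joint samples $$q(y_0\mid y_i)=p^{x}_{0|i}(x_0\mid x_i)\,q^{k}(k_0\mid k_i),\qquad q^{k}(k_0\mid k_i)=\mathcal N\!\Big(k_0;\ (\alpha^{k}_i)^{-1/2}k_i,\ \big(\tfrac{1}{\alpha^{k}_i}-1\big)I\Big).$$ Assume $0<\mathbb{E}_{\hat y_0\sim q(\cdot\mid y_i)}[V(\hat x_0,\hat k_0)\,p^{k}_0(\hat k_0)]<\infty$, and that all integrals below are finite and differentiation under the integral sign with respect to $y_i$ is permitted. Then the score of the noisy joint marginal satisfies $$\nabla_{y_i}\log p_i(y_i)=\frac{\mathbb{E}_{\hat y_0\sim q(\cdot\mid y_i)}\big[s_{\alpha^{y}_i}(\hat y_0\mid y_i)\,V(\hat x_0,\hat k_0)\,p^{k}_0(\hat k_0)\big]}{\mathbb{E}_{\hat y_0\sim q(\cdot\mid y_i)}\big[V(\hat x_0,\hat k_0)\,p^{k}_0(\hat k_0)\big]},$$ where $\hat y_0=[\hat x_0;\hat k_0]$.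
   Context: Let $p^{x}_0$ be a probability density on $\mathbb{R}^{n_x}$ (the model-free/diffusion data distribution), $p^{k}_0$ a probability density on $\mathbb{R}^{n_k}$ (the model-based prior), and $V:\mathbb{R}^{n_x}\times\mathbb{R}^{n_k}\to\mathbb{R}_{\ge 0}$ a measurable ''interaction potential'' such that $Z=\int p^{x}_0(x)p^{k}_0(k)V(x,k)\,dx\,dk\in(0,\infty)$. The clean joint density is $p_0(y_0)=Z^{-1}p^{x}_0(x_0)p^{k}_0(k_0)V(x_0,k_0)$ for $y_0=[x_0;k_0]$. For noise levels $\alpha^{x}_i,\alpha^{k}_i\in(0,1)$ write $\alpha^{y}_i=[\alpha^{x}_i;\alpha^{k}_i]$ and define the joint forward kernel as the product Gaussian $$p_{\alpha^{y}_i}(y_i\mid y_0)=\mathcal N\big(x_i;\sqrt{\alpha^{x}_i}x_0,(1-\alpha^{x}_i)I\big)\,\mathcal N\big(k_i;\sqrt{\alpha^{k}_i}k_0,(1-\alpha^{k}_i)I\big),$$ with the $x$-factor denoted $p^{x}_{\alpha^{x}_i}(x_i\mid x_0)$. The noisy joint marginal is $p_i(y_i)=\int p_{\alpha^{y}_i}(y_i\mid y_0)p_0(y_0)\,dy_0$. The model-free noisy marginal is $p^{x}_i(x_i)=\int p^{x}_{\alpha^{x}_i}(x_i\mid x_0)p^{x}_0(x_0)\,dx_0$ and the model-free denoising posterior is $p^{x}_{0|i}(x_0\mid x_i)=p^{x}_{\alpha^{x}_i}(x_i\mid x_0)p^{x}_0(x_0)/p^{x}_i(x_i)$. The (Tweedie)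 score of the forward kernel is $s_{\alpha^{y}_i}(y_0\mid y_i)=\nabla_{y_i}\log p_{\alpha^{y}_i}(y_i\mid y_0)$, i.e. the vector with $x$-block $-\frac{x_i-\sqrt{\alpha^{x}_i}x_0}{1-\alpha^{x}_i}$ and $k$-block $-\frac{k_i-\sqrt{\alpha^{k}_i}k_0}{1-\alpha^{k}_i}$. *)

From HB Require Import structures.
From mathcomp Require Import all_boot all_order all_algebra.
From mathcomp Require Import all_classical all_reals all_analysis.
Set Implicit Arguments. Unset Strict Implicit. Unset Printing Implicit Defensive.
Import Order.TTheory GRing.Theory Num.Theory.
Import numFieldNormedType.Exports.
Local Open Scope classical_set_scope.
Local Open Scope ring_scope.

(* R^n is represented by n.-tuple R, with the product sigma-algebra generated
   by the coordinate projections (the library's canonical measurable structure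
   on tuples, which coincides with the Borel sigma-algebra of R^n). *)
Notation Rn R n := (n.-tuple (measurableTypeR R)).

Fixpoint lebesgue_n (R : realType) (n : nat) : set (Rn R n) -> \bar R :=
  match n return set (Rn R n) -> \bar R with
  | 0 => fun A => \d_([tuple] : Rn R 0) A
  | n'.+1 => pushforward ((@lebesgue_measure R) \x (@lebesgue_n R n'))%E
               (fun p : measurableTypeR R * Rn R n' => [tuple of p.1 :: p.2])
  end.

Definition lebesgue_joint (R : realType) (nx nk : nat)
  : set (Rn R nx * Rn R nk) -> \bar R :=
  ((@lebesgue_n R nx) \x (@lebesgue_n R nk))%E.

Section defs.
Context (R : realType).

(* real-valued integral (same definition as the library's Rintegral, but for
   an arbitrary set function, since lebesgue_n is defined as a set function) *)
Definition Rinteg d (T : measurableType d) (mu : set T -> \bar R) (f : T -> R) : R :=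
  fine (\int[mu]_x (f x)%:E)%E.

Definition sqdist n (z m : Rn R n) : R :=
  \sum_(i < n) (tnth z i - tnth m i) ^+ 2.

Definition scale_tuple n (c : R) (z : Rn R n) : Rn R n :=
  [tuple c * tnth z i | i < n].

Definition gauss n (m : Rn R n) (v : R) (z : Rn R n) : R :=
  (Num.sqrt (2 * pi * v)) ^- n * expR (- sqdist z m / (2 * v)).

Definition fwd n (a : R) (zi z0 : Rn R n) : R :=
  gauss (scale_tuple (Num.sqrt a) z0) (1 - a) zi.

Definition shift n (z : Rn R n) (j : 'I_n) (t : R) : Rn R n :=
  [tuple (if i == j then tnth z i + t else tnth z i) | i < n].

Definition dx nx nk (f : Rn R nx * Rn R nk -> R) (y : Rn R nx * Rn R nk)
  (j : 'I_nx) : R := derive1 (fun t => f (shift y.1 j t, y.2)) 0.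
Definition dk nx nk (f : Rn R nx * Rn R nk -> R) (y : Rn R nx * Rn R nk)
  (j : 'I_nk) : R := derive1 (fun t => f (y.1, shift y.2 j t)) 0.
Definition derivable_x nx nk (f : Rn R nx * Rn R nk -> R) y (j : 'I_nx) :=
  derivable (fun t => f (shift y.1 j t, y.2)) 0 1.
Definition derivable_k nx nk (f : Rn R nx * Rn R nk -> R) y (j : 'I_nk) :=
  derivable (fun t => f (y.1, shift y.2 j t)) 0 1.

Variables (nx nk : nat).
Variables (px0 : Rn R nx -> R) (pk0 : Rn R nk -> R)
          (V : Rn R nx -> Rn R nk -> R).
Variables (ax ak : R).

Definition Zc : \bar R :=
  (\int[@lebesgue_joint R nx nk]_y0 (px0 y0.1 * pk0 y0.2 * V y0.1 y0.2)%:E)%E.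

Definition p0 (y0 : Rn R nx * Rn R nk) : R :=
  px0 y0.1 * pk0 y0.2 * V y0.1 y0.2 / fine Zc.

Definition fwd_joint (yi y0 : Rn R nx * Rn R nk) : R :=
  fwd ax yi.1 y0.1 * fwd ak yi.2 y0.2.

Definition p_i (yi : Rn R nx * Rn R nk) : R :=
  Rinteg (@lebesgue_joint R nx nk) (fun y0 => fwd_joint yi y0 * p0 y0).

Definition px_i (xi : Rn R nx) : R :=
  Rinteg (@lebesgue_n R nx) (fun x0 => fwd ax xi x0 * px0 x0).
Definition px_post (x0 xi : Rn R nx) : R :=
  fwd ax xi x0 * px0 x0 / px_i xi.

Definition qk (k0 ki : Rn R nk) : R :=
  gauss (scale_tuple (Num.sqrt ak)^-1 ki) (ak^-1 - 1) k0.

Definition q (y0 yi : Rn R nx * Rn R nk) : R :=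
  px_post y0.1 yi.1 * qk y0.2 yi.2.

Definition Eq_q (yi : Rn R nx * Rn R nk) (g : Rn R nx * Rn R nk -> R) : R :=
  Rinteg (@lebesgue_joint R nx nk) (fun y0 => q y0 yi * g y0).

Definition score_x (y0 yi : Rn R nx * Rn R nk) (j : 'I_nx) : R :=
  - (tnth yi.1 j - Num.sqrt ax * tnth y0.1 j) / (1 - ax).
Definition score_k (y0 yi : Rn R nx * Rn R nk) (j : 'I_nk) : R :=
  - (tnth yi.2 j - Num.sqrt ak * tnth y0.2 j) / (1 - ak).

Definition wVk (y0 : Rn R nx * Rn R nk) : R := V y0.1 y0.2 * pk0 y0.2.

End defs.

From Pilot Require Import Defs.
From HB Require Import structures.
From mathcomp Require Import all_boot all_order all_algebra.
From mathcomp Require Import all_classical all_reals all_analysis.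
From mathcomp Require Import ring.
Set Implicit Arguments. Unset Strict Implicit. Unset Printing Implicit Defensive.
Import Order.TTheory GRing.Theory Num.Theory.
Import numFieldNormedType.Exports.
Local Open Scope classical_set_scope.
Local Open Scope ring_scope.

(* The proposal times the weight is the joint integrand up to a factor free of
   y0: q^k(k0 | ki) = ak^(nk/2) N(ki; sqrt(ak) k0, (1 - ak) I), hence
   q(y0 | yi) V(x0, k0) p^k_0(k0) = c p(yi | y0) p_0(y0) with
   c = ak^(nk/2) Z / p^x_i(xi).  Differentiating the Gaussian forward kernel in
   yi multiplies the integrand by the Tweedie score, so both expectations in
   the ratio are c times the corresponding integrals against p(yi | .) p_0, and
   c cancels in d p_i / p_i = d log p_i. *)

Section gt0_mule.
Local Open Scope ereal_scope.
Context (R : realType) (c : R).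
Hypothesis c_gt0 : (0 < c)%R.

Lemma gt0_muleDr (a b : \bar R) : c%:E * (a + b) = c%:E * a + c%:E * b.
Proof.
have cy : c%:E * +oo = +oo by rewrite mulry gtr0_sg // mul1e.
have cNy : c%:E * -oo = -oo by rewrite mulrNy gtr0_sg // mul1e.
by case: a => [a| |]; case: b => [b| |] //=; rewrite ?cy ?cNy // -?EFinD -!EFinM mulrDr.
Qed.

Lemma gt0_mule_fsumr (T : choiceType) (F : T -> \bar R) (P : set T) :
  c%:E * (\sum_(i \in P) F i) = \sum_(i \in P) c%:E * F i.
Proof.
rewrite (big_morph _ gt0_muleDr (mule0 _)); apply: finmap.eq_fbigl => y.
rewrite !unlock.
suff -> : P `&` F @^-1` [set~ 0] = P `&` (fun i => c%:E * F i) @^-1` [set~ 0] by [].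
apply/seteqP; split=> z /= [Pz Fz0]; split=> //; apply: contra_not Fz0.
  by move=> /eqP; rewrite mule_eq0 eqe (gt_eqF c_gt0) => /eqP.
by move=> ->; rewrite mule0.
Qed.

Lemma gt0_fineZ (e : \bar R) : fine (c%:E * e) = (c * fine e)%R.
Proof.
case: e => [e| |] //.
- by rewrite mulry gtr0_sg // mul1e /= mulr0.
- by rewrite mulrNy gtr0_sg // mul1e /= mulr0.
Qed.

End gt0_mule.

(* [lebesgue_n] is built as a plain set function, so the library's integral
   lemmas, stated for measures, do not apply to it; the few needed here are
   proved for an arbitrary set function, from the definition of the integral. *)
Section set_function_integral.
Local Open Scope ereal_scope.
Context d (T : measurableType d) (R : realType) (mu : set T -> \bar R).
Import HBNNSimple.

Definition nnintegral (f : T -> \bar R) :=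
  ereal_sup [set sintegral mu h |
    h in [set h : {nnsfun T >-> R} | forall x, (h x)%:E <= f x]].

Lemma gt0_sintegralrM (c : R) (h : T -> R) : (0 < c)%R ->
  sintegral mu (cst c \* h)%R = c%:E * sintegral mu h.
Proof.
move=> c_gt0; have c_neq0 : c != 0%R by rewrite gt_eqF.
rewrite !sintegralET gt0_mule_fsumr //.
rewrite (reindex_fsbigT ( *%R c))/=; last first.
  by exists ( *%R c^-1); [exact: mulKf|exact: mulVKf].
apply: eq_fsbigr => x.
by rewrite preimage_cstM // [(_ / c)%R]mulrC mulKf // EFinM muleA.
Qed.

Lemma gt0_nnintegralZl (c : R) (f : T -> \bar R) : (0 < c)%R ->
  nnintegral (fun x => c%:E * f x) = c%:E * nnintegral f.
Proof.
move=> c_gt0; have c_ge0 := ltW c_gt0; have cV_ge0 : (0 <= c^-1)%R by rewrite invr_ge0.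
rewrite /nnintegral -ereal_sup_pZl //; congr ereal_sup; apply/seteqP; split.
- move=> _ [h hf <-]; exists (sintegral mu (scale_nnsfun h cV_ge0)).
    exists (scale_nnsfun h cV_ge0) => // x /=.
    rewrite EFinM -(@lee_pmul2l _ c%:E) ?lte_fin // muleA -EFinM.
    by rewrite divff ?gt_eqF // mul1r; exact: hf.
  have -> : sintegral mu (scale_nnsfun h cV_ge0) = c^-1%:E * sintegral mu h.
    by apply: gt0_sintegralrM; rewrite invr_gt0.
  by rewrite muleA -EFinM divff ?gt_eqF // mul1e.
- move=> _ [_ [h hf <-] <-]; exists (scale_nnsfun h c_ge0).
    by move=> x /=; rewrite EFinM lee_pmul2l ?lte_fin.
  exact: gt0_sintegralrM.
Qed.

Lemma gt0_integralZl (c : R) (D : set T) (f : T -> \bar R) : (0 < c)%R ->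
  \int[mu]_(x in D) (c%:E * f x) = c%:E * \int[mu]_(x in D) f x.
Proof.
move=> c_gt0; rewrite /integral.
have -> : (fun x => c%:E * f x) \_ D = (fun x => c%:E * (f \_ D) x).
  by apply/funext => x; rewrite !patchE; case: ifP; rewrite ?mule0.
rewrite ge0_funeposM ?ge0_funenegM ?ltW //.
rewrite -/(nnintegral _) -/(nnintegral _) -/(nnintegral _) -/(nnintegral _).
by rewrite !gt0_nnintegralZl // -muleN gt0_muleDr.
Qed.

Hypothesis mu0 : mu set0 = 0.

Lemma setfun_sintegral0 : sintegral mu (cst 0%R) = 0.
Proof.
rewrite sintegralET fsbig1 // => r _; rewrite preimage_cst.
by case: ifPn => [/[!inE] <-|]; rewrite ?mul0e // mu0 mule0.
Qed.

Lemma nnintegral0 : nnintegral (cst 0) = 0.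
Proof.
apply/eqP; rewrite eq_le; apply/andP; split.
  apply/ge_ereal_sup => _ [h /= h0 <-].
  rewrite (eq_sintegral (cst 0%R)) ?setfun_sintegral0 // => x /=.
  by apply/eqP; rewrite eq_le -!lee_fin h0 lee_fin fun_ge0.
by apply/ereal_sup_ubound; exists nnsfun0 => //; rewrite setfun_sintegral0.
Qed.

Lemma nnintegral_ge0 (f : T -> \bar R) : (forall x, 0 <= f x) -> 0 <= nnintegral f.
Proof.
move=> f_ge0; apply/ereal_sup_ubound; exists nnsfun0 => //.
by rewrite setfun_sintegral0.
Qed.

Lemma setfun_ge0_integralTE (f : T -> \bar R) : (forall x, 0 <= f x) ->
  \int[mu]_x f x = nnintegral f.
Proof.
move=> f_ge0; rewrite /integral patch_setT -/(nnintegral _) -/(nnintegral _).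
have -> : f^\- = cst 0 by apply/funext => x; rewrite (ge0_funenegE (D := setT)) ?inE.
have -> : f^\+ = f by apply/funext => x; rewrite (ge0_funeposE (D := setT)) ?inE.
by rewrite nnintegral0 sube0.
Qed.

Lemma setfun_integral_ge0 (f : T -> \bar R) : (forall x, 0 <= f x) ->
  0 <= \int[mu]_x f x.
Proof. by move=> f_ge0; rewrite setfun_ge0_integralTE // nnintegral_ge0. Qed.

Lemma setfun_integral0 : \int[mu]_x (0 : \bar R) = 0.
Proof. by rewrite setfun_ge0_integralTE // nnintegral0. Qed.

End set_function_integral.
Section gaussian.
Context (R : realType) (n : nat).
Implicit Types (z m : Rn R n) (v : R) (j : 'I_n).

Lemma shift0 z j : Defs.shift z j 0 = z.
Proof.
by apply: eq_from_tnth => i; rewrite tnth_mktuple; case: eqP => // ->; rewrite addr0.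
Qed.

Lemma gauss_ge0 z m v : 0 <= gauss m v z.
Proof. by rewrite /gauss mulr_ge0 ?invr_ge0 ?exprn_ge0 ?sqrtr_ge0 ?expR_ge0. Qed.

Lemma sqdist_shift z m j (t : R) :
  sqdist (Defs.shift z j t) m = (tnth z j - tnth m j + t) ^+ 2
    + \sum_(i < n | i != j) (tnth z i - tnth m i) ^+ 2.
Proof.
rewrite /sqdist (bigD1 j) //= tnth_mktuple eqxx addrAC; congr (_ + _).
by apply: eq_bigr => i /negPf ij; rewrite tnth_mktuple ij.
Qed.

Lemma is_derive_sqdist_shift z m j :
  is_derive (0 : R) 1 (fun t => sqdist (Defs.shift z j t) m) (2 * (tnth z j - tnth m j)).
Proof.
set a := tnth z j - tnth m j.
have -> : (fun t => sqdist (Defs.shift z j t) m) =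
    (fun t => (a + t) ^+ 2 + \sum_(i < n | i != j) (tnth z i - tnth m i) ^+ 2).
  by apply: funext => t; rewrite sqdist_shift.
have da : is_derive (0 : R) 1 (fun t : R => a + t) 1.
  have := is_deriveD (is_derive_cst a (0 : R) 1) (is_derive_id (0 : R) (1 : R)).
  by rewrite add0r.
set C := \sum_(i < n | i != j) _.
apply: (is_derive_eq (is_deriveD (is_deriveX 2 da) (is_derive_cst C (0 : R) 1))).
by rewrite addr0 expr1 addr0 -[_%:A]/(_ * 1) mulr1.
Qed.

Lemma is_derive_gauss_shift z m v j :
  is_derive (0 : R) 1 (fun t => gauss m v (Defs.shift z j t))
    (gauss m v z * (- (tnth z j - tnth m j) / v)).
Proof.
set K := Num.sqrt (2 * pi * v) ^- n; set w := - (2 * v)^-1.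
have -> : (fun t => gauss m v (Defs.shift z j t)) =
    (fun t => K * expR (w * sqdist (Defs.shift z j t) m)).
  by apply: funext => t; rewrite /gauss /w !mulNr (mulrC (2 * v)^-1).
have dexp := is_derive1_comp (is_derive_expR _)
                             (is_deriveZ w (is_derive_sqdist_shift z m j)).
apply: (is_derive_eq (is_deriveZ K dexp)).
rewrite /= shift0 /GRing.scale /=.
have -> : w * sqdist z m = - sqdist z m / (2 * v) by rewrite mulrC mulNr -mulrN.
have -> : w * (2 * (tnth z j - tnth m j)) = - (tnth z j - tnth m j) / v.
  by rewrite /w invfM !mulNr mulrACA mulVf ?pnatr_eq0 // mul1r mulrC.
by rewrite mulrA.
Qed.

Lemma gauss_scale z m (s v : R) : 0 < s -> 0 < v ->
  gauss (scale_tuple s^-1 z) (v / s ^+ 2) m = s ^+ n * gauss (scale_tuple s m) v z.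
Proof.
move=> s_gt0 v_gt0; have s_neq0 : s != 0 by rewrite gt_eqF.
have v_neq0 : v != 0 by rewrite gt_eqF.
have E : sqdist m (scale_tuple s^-1 z) / (2 * (v / s ^+ 2)) =
          sqdist z (scale_tuple s m) / (2 * v).
  rewrite /sqdist !mulr_suml; apply: eq_bigr => i _; rewrite !tnth_mktuple.
  by field; rewrite s_neq0 v_neq0.
have S : Num.sqrt (2 * pi * (v / s ^+ 2)) = Num.sqrt (2 * pi * v) / s.
  rewrite mulrA sqrtrM ?mulr_ge0 ?pi_ge0 ?ltW // sqrtrV ?exprn_ge0 ?ltW //.
  by rewrite sqrtr_sqr gtr0_norm.
by rewrite /gauss !mulNr E S expr_div_n invf_div mulrA.
Qed.
End gaussian.

Lemma qk_fwd (R : realType) n (a : R) (k0 ki : Rn R n) : 0 < a < 1 ->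
  qk a k0 ki = Num.sqrt a ^+ n * fwd a ki k0.
Proof.
case/andP=> a_gt0 a_lt1; have s_gt0 : 0 < Num.sqrt a by rewrite sqrtr_gt0.
rewrite /qk; have -> : a^-1 - 1 = (1 - a) / Num.sqrt a ^+ 2.
  by rewrite sqr_sqrtr ?ltW // mulrBl mul1r divff ?gt_eqF.
by rewrite gauss_scale // subr_gt0.
Qed.

Lemma gt0_RintegZl d (T : measurableType d) (R : realType) (mu : set T -> \bar R)
    (c : R) (f : T -> R) : 0 < c ->
  Rinteg mu (fun x => c * f x) = c * Rinteg mu f.
Proof.
by move=> c_gt0; rewrite /Rinteg -gt0_fineZ // -gt0_integralZl.
Qed.

Lemma Rinteg_ge0 d (T : measurableType d) (R : realType) (mu : set T -> \bar R)
    (f : T -> R) : mu set0 = 0%E -> (forall x, 0 <= f x) -> 0 <= Rinteg mu f.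
Proof.
by move=> mu0 f_ge0; apply/fine_ge0/setfun_integral_ge0 => // x; rewrite lee_fin.
Qed.

Lemma lebesgue_n0 (R : realType) n : @lebesgue_n R n set0 = 0%E.
Proof.
elim: n => [|n IH] /=; first by rewrite /dirac indicE in_set0.
rewrite /pushforward preimage_set0 /product_measure1.
by under eq_integral do rewrite /= xsection0 IH; rewrite integral0.
Qed.

Lemma lebesgue_joint0 (R : realType) nx nk : @lebesgue_joint R nx nk set0 = 0%E.
Proof.
rewrite /lebesgue_joint /product_measure1 -(setfun_integral0 (lebesgue_n0 R nx)).
by congr (integral _ _ _); apply: funext => x /=; rewrite xsection0 lebesgue_n0.
Qed.

Lemma is_derive_ln_comp (R : realType) (f : R -> R) (x df : R) :
  0 < f x -> is_derive x 1 f df -> is_derive x 1 (fun t => ln (f t)) (df / f x).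
Proof.
move=> fx_gt0 fdf; apply: is_derive_eq.
  exact: is_derive1_comp (is_derive1_ln fx_gt0) fdf.
by rewrite mulrC.
Qed.

Lemma ln_comp_derive1 (R : realType) (f : R -> R) (x : R) :
  derivable f x 1 -> 0 < f x ->
  derivable (fun t => ln (f t)) x 1 /\
  derive1 (fun t => ln (f t)) x = derive1 f x / f x.
Proof.
move=> /derivableP fdf fx_gt0; have := is_derive_ln_comp fx_gt0 fdf.
by move=> lnf; split; [exact: ex_derive|rewrite !derive1E derive_val].
Qed.

Section score_identity.
Context (R : realType) (nx nk : nat) (px0 : Rn R nx -> R) (pk0 : Rn R nk -> R)
  (V : Rn R nx -> Rn R nk -> R) (ax ak : R).
Local Notation Y := (Rn R nx * Rn R nk)%type.
Local Notation integrand y0 y := (fwd_joint ax ak y y0 * p0 px0 pk0 V y0).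

Lemma dx_fwd_joint (y0 yi : Y) (j : 'I_nx) :
  dx (fun y => integrand y0 y) yi j = score_x ax y0 yi j * integrand y0 yi.
Proof.
set A := fwd ak yi.2 y0.2 * p0 px0 pk0 V y0.
have D := is_deriveZ A
  (is_derive_gauss_shift yi.1 (scale_tuple (Num.sqrt ax) y0.1) (1 - ax) j).
rewrite /dx /fwd_joint /=
  (_ : (fun t => _) = A \*: (fun t => fwd ax (Defs.shift yi.1 j t) y0.1)).
  by rewrite derive1E derive_val /score_x tnth_mktuple /GRing.scale /= /A /fwd; ring.
by apply: funext => t; rewrite -mulrA; exact: mulrC.
Qed.

Lemma dk_fwd_joint (y0 yi : Y) (j : 'I_nk) :
  dk (fun y => integrand y0 y) yi j = score_k ak y0 yi j * integrand y0 yi.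
Proof.
set A := fwd ax yi.1 y0.1 * p0 px0 pk0 V y0.
have D := is_deriveZ A
  (is_derive_gauss_shift yi.2 (scale_tuple (Num.sqrt ak) y0.2) (1 - ak) j).
rewrite /dk /fwd_joint /=
  (_ : (fun t => _) = A \*: (fun t => fwd ak (Defs.shift yi.2 j t) y0.2)).
  by rewrite derive1E derive_val /score_k tnth_mktuple /GRing.scale /= /A /fwd; ring.
by apply: funext => t; rewrite mulrAC.
Qed.

Section proposal.
Variables (xi : Rn R nx) (ki : Rn R nk).
Hypotheses (px0_ge0 : forall x, 0 <= px0 x) (Z_gt0 : 0 < fine (Zc px0 pk0 V))
  (ak01 : 0 < ak < 1).
Hypothesis Eq_wVk_gt0 :
  (0 < \int[@lebesgue_joint R nx nk]_y0 (q px0 ax ak y0 (xi, ki) * wVk pk0 V y0)%:E)%E.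

Lemma px_i_gt0 : 0 < px_i px0 ax xi.
Proof.
have px_ge0 : 0 <= px_i px0 ax xi.
  by apply: Rinteg_ge0 (lebesgue_n0 _ _) _ => x; rewrite mulr_ge0 // gauss_ge0.
(* if p^x_i(xi) = 0 then q vanishes (x / 0 = 0), contradicting E_q[V p^k_0] > 0 *)
rewrite lt_def px_ge0 andbT; apply/eqP => px_eq0; move: Eq_wVk_gt0.
have -> : (fun y0 => (q px0 ax ak y0 (xi, ki) * wVk pk0 V y0)%:E) = fun=> 0%E.
  by apply: funext => y0; rewrite /q /px_post px_eq0 invr0 mulr0 !mul0r.
by rewrite setfun_integral0 ?lebesgue_joint0 // ltxx.
Qed.

Let c := Num.sqrt ak ^+ nk * fine (Zc px0 pk0 V) / px_i px0 ax xi.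

Lemma c_gt0 : 0 < c.
Proof.
by rewrite divr_gt0 ?px_i_gt0 // mulr_gt0 // exprn_gt0 // sqrtr_gt0; case/andP: ak01.
Qed.

Lemma q_wVkE y0 : q px0 ax ak y0 (xi, ki) * wVk pk0 V y0 = c * integrand y0 (xi, ki).
Proof.
rewrite /q /px_post /wVk /p0 /fwd_joint /= qk_fwd // /c.
by field; rewrite !gt_eqF ?px_i_gt0.
Qed.

Lemma Eq_q_wVkE (g : Y -> R) :
  Eq_q px0 ax ak (xi, ki) (fun y0 => g y0 * wVk pk0 V y0) =
  c * Rinteg (@lebesgue_joint R nx nk) (fun y0 : Y => g y0 * integrand y0 (xi, ki)).
Proof.
rewrite /Eq_q -gt0_RintegZl ?c_gt0 //; congr Rinteg; apply: funext => y0.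
by rewrite mulrCA q_wVkE mulrCA.
Qed.

Lemma Eq_q_wVk : Eq_q px0 ax ak (xi, ki) (wVk pk0 V) = c * p_i px0 pk0 V ax ak (xi, ki).
Proof.
rewrite /Eq_q /p_i -gt0_RintegZl ?c_gt0 //; congr Rinteg; apply: funext => y0.
exact: q_wVkE.
Qed.

End proposal.

End score_identity.

Theorem theorem1 (R : realType) (nx nk : nat)
    (px0 : Rn R nx -> R) (pk0 : Rn R nk -> R) (V : Rn R nx -> Rn R nk -> R)
    (ax ak : R) (xi : Rn R nx) (ki : Rn R nk) :
  (* p^x_0 and p^k_0 are probability densities (w.r.t. Lebesgue measure) *)
  measurable_fun setT px0 -> (forall x, 0 <= px0 x) ->
  (\int[@lebesgue_n R nx]_x (px0 x)%:E = 1)%E ->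
  measurable_fun setT pk0 -> (forall k, 0 <= pk0 k) ->
  (\int[@lebesgue_n R nk]_k (pk0 k)%:E = 1)%E ->
  (* V is a measurable nonnegative interaction potential with Z in (0, oo) *)
  measurable_fun setT (fun y : Rn R nx * Rn R nk => V y.1 y.2) ->
  (forall x k, 0 <= V x k) ->
  (0 < Zc px0 pk0 V < +oo)%E ->
  (* noise levels *)
  0 < ax < 1 -> 0 < ak < 1 ->
  let yi := (xi, ki) in
  let pi := p_i px0 pk0 V ax ak in
  let integrand := fun y0 y => fwd_joint ax ak y y0 * p0 px0 pk0 V y0 in
  (* the integrals defining p_i(y_i) and p^x_i(x_i) are finite *)
  (@lebesgue_joint R nx nk).-integrable setT (fun y0 => (integrand y0 yi)%:E) ->
  (@lebesgue_n R nx).-integrable setT (fun x0 => (fwd ax xi x0 * px0 x0)%:E) ->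
  (* 0 < E_q[V p^k_0] < oo *)
  (0 < \int[@lebesgue_joint R nx nk]_y0 (q px0 ax ak y0 yi * wVk pk0 V y0)%:E
     < +oo)%E ->
  (* E_q[s V p^k_0] is finite (each component) *)
  (forall j : 'I_nx, (@lebesgue_joint R nx nk).-integrable setT
     (fun y0 => (q px0 ax ak y0 yi * (score_x ax y0 yi j * wVk pk0 V y0))%:E)) ->
  (forall j : 'I_nk, (@lebesgue_joint R nx nk).-integrable setT
     (fun y0 => (q px0 ax ak y0 yi * (score_k ak y0 yi j * wVk pk0 V y0))%:E)) ->
  (* differentiation under the integral sign w.r.t. y_i is permitted *)
  (forall j : 'I_nx,
     derivable_x pi yi j /\
     (@lebesgue_joint R nx nk).-integrable setT
        (fun y0 => (dx (integrand y0) yi j)%:E) /\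
     dx pi yi j = Rinteg (@lebesgue_joint R nx nk) (fun y0 => dx (integrand y0) yi j)) ->
  (forall j : 'I_nk,
     derivable_k pi yi j /\
     (@lebesgue_joint R nx nk).-integrable setT
        (fun y0 => (dk (integrand y0) yi j)%:E) /\
     dk pi yi j = Rinteg (@lebesgue_joint R nx nk) (fun y0 => dk (integrand y0) yi j)) ->
  (* conclusion: the score of p_i, blockwise and componentwise *)
  (forall j : 'I_nx,
     derivable_x (fun y => ln (pi y)) yi j /\
     dx (fun y => ln (pi y)) yi j =
       Eq_q px0 ax ak yi (fun y0 => score_x ax y0 yi j * wVk pk0 V y0)
       / Eq_q px0 ax ak yi (wVk pk0 V)) /\
  (forall j : 'I_nk,
     derivable_k (fun y => ln (pi y)) yi j /\
     dk (fun y => ln (pi y)) yi j =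
       Eq_q px0 ax ak yi (fun y0 => score_k ak y0 yi j * wVk pk0 V y0)
       / Eq_q px0 ax ak yi (wVk pk0 V)).
Proof.
move=> _ px0_ge0 _ _ _ _ _ _ Z_oo _ ak01 yi pi integrand _ _ Eq_wVk_oo _ _ Hdx Hdk.
subst yi; have Z_gt0 : 0 < fine (Zc px0 pk0 V) by apply: fine_gt0.
have /andP[Eq_wVk_gt0 _] := Eq_wVk_oo.
have c_pos := c_gt0 px0_ge0 Z_gt0 ak01 Eq_wVk_gt0.
have Eq_gE := Eq_q_wVkE px0_ge0 Z_gt0 ak01 Eq_wVk_gt0.
have Eq_1E := Eq_q_wVk px0_ge0 Z_gt0 ak01 Eq_wVk_gt0.
set c := Num.sqrt ak ^+ nk * _ / _ in c_pos Eq_gE Eq_1E.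
have pi_gt0 : 0 < pi (xi, ki).
  move: (fine_gt0 Eq_wVk_oo); rewrite -/(Rinteg _ _) -/(Eq_q _ _ _ _ _) Eq_1E.
  by rewrite pmulr_rgt0.
have cancel_c N : (c * N) / (c * pi (xi, ki)) = N / pi (xi, ki).
  by rewrite -mulf_div (divff (lt0r_neq0 c_pos)) mul1r.
split=> j.
- have [der [_ dpi]] := Hdx j.
  have [|lnder lnval] := ln_comp_derive1 der; first by rewrite /= shift0.
  split=> //; rewrite /dx lnval /= shift0 -[derive1 _ _]/(dx pi (xi, ki) j) dpi.
  rewrite Eq_gE Eq_1E cancel_c; congr (Rinteg _ _ / _).
  by apply: funext => y0; exact: dx_fwd_joint.
- have [der [_ dpi]] := Hdk j.
  have [|lnder lnval] := ln_comp_derive1 der; first by rewrite /= shift0.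
  split=> //; rewrite /dk lnval /= shift0 -[derive1 _ _]/(dk pi (xi, ki) j) dpi.
  rewrite Eq_gE Eq_1E cancel_c; congr (Rinteg _ _ / _).
  by apply: funext => y0; exact: dk_fwd_joint.
Qed.
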